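(* Let $M$ be an ordinal monoid with merge and $A\subseteq M$ nonempty. Then at least one of the following holds: (1) $a\cdot\mathrm{Cl}^{+}_{\sharp}(A)\subsetneq\mathrm{Cl}^{+}_{\sharp}(A)$ for some $a\in A$; (2) $\mathrm{Cl}^{+}_{\sharp}(A)\cdot a\subsetneq\mathrm{Cl}^{+}_{\sharp}(A)$ for some $a\in A$; (3) $\mathrm{Cl}^{+}_{\sharp}(A)$ has a maximum element for the order $\le$.
   Context: An ordinal monoid has generalised product $\pi$ on countable-ordinal-length words; $1=\pi(\varepsilon)$, $x\cdot y=\pi(xy)$, $x^\omega=\pi(xxx\cdots)$; ordered by $\le$ if $u\le v$ letterwise implies $\pi(u)\le\pi(v)$. In a finite semigroup $x^!$ is the idempotent power, $x^{!+k}$ the eventual value of $x^{n!+k}$. Ordinal monoid with merge: $(M,1,\le,\cdot,-^\omega,-^\sharp)$, $M$ finite, $(M,1,\le,\cdot,-^\omega)$ the presentation of an ordered finite ordinal monoid, $-^\sharp\colon M\to M$ monotone with $a^{!+k}\le a^\sharp$, $(a^!)^\sharp=a^!$, $a^\sharp a^\sharp=(a^\sharp)^\sharp=a^\sharp$, $(ab)^\sharp=a(ba)^\sharp b$ for all $a,b$, $k\in\mathbb Z$. $\mathrm{Cl}^{+}_{\sharp}(A)$ is the closure of $A$ under $\cdot$ and $-^\sharp$; for $a\in M$, $X\subseteq M$: $a\cdot X=\{a\cdot x:x\in X\}$, $X\cdot a=\{x\cdot a:x\in X\}$. *)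

From mathcomp Require Import all_boot all_order all_algebra.
Set Implicit Arguments. Unset Strict Implicit. Unset Printing Implicit Defensive.

Definition mpow (T : Type) (one : T) (mul : T -> T -> T) (a : T) (n : nat) : T :=
  iter n (mul a) one.

(* x^{!+k} in a finite monoid with N = #|T| elements: the eventual value of
   x^{n!+k}.  It equals x^{N! * (|k|+1) + k}: this exponent is >= N (hence >=
   the index of x) and congruent to n!+k modulo N! (hence modulo the period of x)
   for every n >= N. *)
Definition bang_exp (N : nat) (k : int) : nat :=
  absz ((N`!)%:Z * (absz k).+1%:Z + k)%R.

Record ordinal_monoid_merge := OMM {
  omm_car :> finType;
  omm_one : omm_car;
  omm_le : rel omm_car;
  omm_mul : omm_car -> omm_car -> omm_car;
  omm_omega : omm_car -> omm_car;
  omm_sharp : omm_car -> omm_car;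
  omm_le_refl : forall a, omm_le a a;
  omm_le_anti : forall a b, omm_le a b -> omm_le b a -> a = b;
  omm_le_trans : forall a b c, omm_le a b -> omm_le b c -> omm_le a c;
  omm_mulA : forall a b c, omm_mul a (omm_mul b c) = omm_mul (omm_mul a b) c;
  omm_mul1l : forall a, omm_mul omm_one a = a;
  omm_mul1r : forall a, omm_mul a omm_one = a;
  omm_omega_mul : forall a b,
      omm_omega (omm_mul a b) = omm_mul a (omm_omega (omm_mul b a));
  omm_omega_pow : forall a n, 0 < n ->
      omm_omega (mpow omm_one omm_mul a n) = omm_omega a;
  omm_mul_mono : forall a a' b b', omm_le a a' -> omm_le b b' ->
      omm_le (omm_mul a b) (omm_mul a' b');
  omm_omega_mono : forall a b, omm_le a b -> omm_le (omm_omega a) (omm_omega b);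
  omm_sharp_mono : forall a b, omm_le a b -> omm_le (omm_sharp a) (omm_sharp b);
  omm_sharp_ge : forall a (k : int),
      omm_le (mpow omm_one omm_mul a (bang_exp #|omm_car| k)) (omm_sharp a);
  omm_sharp_idem_pow : forall a,
      omm_sharp (mpow omm_one omm_mul a (bang_exp #|omm_car| 0)) =
      mpow omm_one omm_mul a (bang_exp #|omm_car| 0);
  omm_sharp_sq : forall a, omm_mul (omm_sharp a) (omm_sharp a) = omm_sharp a;
  omm_sharp_sharp : forall a, omm_sharp (omm_sharp a) = omm_sharp a;
  omm_sharp_mul : forall a b,
      omm_sharp (omm_mul a b) = omm_mul a (omm_mul (omm_sharp (omm_mul b a)) b)
}.

Definition cl_step (M : ordinal_monoid_merge) (A X : {set M}) : {set M} :=
  A :|: [set omm_mul x y | x in X, y in X] :|: [set omm_sharp x | x in X].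

Definition Clsharp (M : ordinal_monoid_merge) (A : {set M}) : {set M} :=
  fixset (cl_step A).

Definition lmul_set (M : ordinal_monoid_merge) (a : M) (X : {set M}) : {set M} :=
  [set omm_mul a x | x in X].
Definition rmul_set (M : ordinal_monoid_merge) (X : {set M}) (a : M) : {set M} :=
  [set omm_mul x a | x in X].

From mathcomp Require Import all_boot all_order all_algebra.
From mathcomp Require Import fingroup perm cyclic.
Set Implicit Arguments. Unset Strict Implicit.

(* If neither (1) nor (2) holds, then left and right multiplication by every
   a in A permute C = Cl(A).  In a monoid with N elements every permutation of
   C has order dividing N!, so e = a^(N!) is a two-sided unit of C, the same
   for all a in A.  From e <= a^# and a = a^(2 N! + 1) <= a^# one builds, as a
   product of such sharps, an element p of C above e and above A; then
   m = p^# >= p^(N!) >= p is idempotent, fixed by #, and above A, so it bounds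
   the whole closure C from above. *)

Lemma iter_fact_card_id (T : finType) (f : T -> T) (C : {set T}) :
  f @: C = C -> {in C, forall x, iter #|T|`! f x = x}.
Proof.
move=> fC.
have fCin x : x \in C -> f x \in C by move=> xC; rewrite -fC imset_f.
have f_inj : {in C &, injective f} by apply/imset_injP; rewrite fC.
pose g x := if x \in C then f x else x.
have g_inj : injective g.
  move=> x y; rewrite /g; case: ifP => xC; case: ifP => yC //.
  - exact: f_inj.
  - by move=> fxy; move: (fCin x xC); rewrite fxy yC.
  - by move=> fxy; move: (fCin y yC); rewrite -fxy xC.
pose s := perm g_inj.
have s_fact : (s ^+ #|T|`!)%g = 1%g.
  have -> : #|T|`! = #|[set: {perm T}]|.
    rewrite cardsT -cardsT -card_perm; apply: eq_card => u.
    by rewrite !inE; apply/subsetP => z; rewrite inE.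
  by apply: expg_cardG; rewrite inE.
move=> x xC.
have iter_s n : iter n s x = iter n f x /\ iter n f x \in C.
  elim: n => [|n [IHs IHn]] //=.
  by rewrite IHs permE /g IHn fCin.
by rewrite -(proj1 (iter_s _)) -permX s_fact perm1.
Qed.

Lemma exists_proper_or_eq (I T : finType) (D : {set I}) (F : I -> {set T})
    (C : {set T}) :
  {in D, forall i, F i \subset C} ->
  (exists2 i, i \in D & F i \proper C) \/ {in D, forall i, F i = C}.
Proof.
move=> FC; case: (boolP [exists i in D, F i \proper C]).
  by case/exists_inP => i iD FiC; left; exists i.
move/exists_inPn => notproper; right => i iD.
by case: (eqVproper (FC i iD)) => // FiC; move: (notproper i iD); rewrite FiC.
Qed.

Lemma bang_exp0 N : bang_exp N 0 = N`!.
Proof. by rewrite /bang_exp /= muln1 addn0. Qed.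

Lemma bang_exp1 N : bang_exp N 1 = N`! + (N`! + 1).
Proof. by rewrite /bang_exp /= muln2 -addnn addnA. Qed.

Section OrdinalMonoidMerge.

Variable M : ordinal_monoid_merge.

Local Notation mul := (@omm_mul M).
Local Notation le := (@omm_le M).
Local Notation sharp := (@omm_sharp M).
Local Notation pow := (mpow (omm_one M) (@omm_mul M)).

Lemma mpow1 a : pow a 1 = a.
Proof. by rewrite /mpow /= omm_mul1r. Qed.

Lemma mpowD a m n : pow a (m + n) = mul (pow a m) (pow a n).
Proof.
elim: m => [|m IHm]; first by rewrite /= omm_mul1l.
by rewrite addSn /mpow /= -!/(mpow _ _ a _) IHm omm_mulA.
Qed.

Lemma mul_mpowl a x n : mul (pow a n) x = iter n (mul a) x.
Proof.
elim: n => [|n IHn] /=; first by rewrite omm_mul1l.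
by rewrite -omm_mulA -/(mpow _ _ a n) IHn.
Qed.

Lemma mul_mpowr a x n : mul x (pow a n) = iter n (mul^~ a) x.
Proof.
elim: n => [|n IHn]; first by rewrite /= omm_mul1r.
have -> : pow a n.+1 = mul (pow a n) a by rewrite -addn1 mpowD mpow1.
by rewrite omm_mulA IHn.
Qed.

Section UnitBelow.

Variables e p : M.
Hypotheses (ee : mul e e = e) (e_le_p : le e p) (pe : mul p e = p).

Lemma unit_le_mpow n : le e (pow p n.+1).
Proof.
elim: n => [|n IHn]; first by rewrite mpow1.
by rewrite -ee; apply: omm_mul_mono.
Qed.

Lemma le_mpow n : le p (pow p n.+1).
Proof.
case: n => [|n]; first by rewrite mpow1; apply: omm_le_refl.
by rewrite -{1}pe; apply: omm_mul_mono; [apply: omm_le_refl | apply: unit_le_mpow].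
Qed.

Lemma le_sharp_of_unit : le p (sharp p).
Proof.
apply: omm_le_trans (le_mpow #|M|`!.-1) _.
by rewrite prednK ?fact_gt0 // -bang_exp0; apply: omm_sharp_ge.
Qed.

End UnitBelow.

Lemma cl_step_mono (A : {set M}) : {homo cl_step A : X Y / X \subset Y}.
Proof.
move=> X Y XY; apply/subsetP => z; rewrite /cl_step !inE.
case/orP => [/orP [-> //|] | ].
  case/imset2P => x y xX yX ->; apply/orP; left; apply/orP; right.
  by apply: imset2_f; apply: (subsetP XY).
by case/imsetP => x xX ->; apply/orP; right; apply: imset_f; apply: (subsetP XY).
Qed.

Lemma Clsharp_fix (A : {set M}) : cl_step A (Clsharp A) = Clsharp A.
Proof. exact/fixsetK/cl_step_mono. Qed.

Lemma Clsharp_base (A : {set M}) x : x \in A -> x \in Clsharp A.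
Proof. by move=> xA; rewrite -Clsharp_fix !inE xA. Qed.

Lemma Clsharp_mul (A : {set M}) x y :
  x \in Clsharp A -> y \in Clsharp A -> mul x y \in Clsharp A.
Proof. by move=> xC yC; rewrite -Clsharp_fix !inE imset2_f ?orbT. Qed.

Lemma Clsharp_sharp (A : {set M}) x : x \in Clsharp A -> sharp x \in Clsharp A.
Proof. by move=> xC; rewrite -Clsharp_fix !inE imset_f ?orbT. Qed.

Lemma Clsharp_mpow (A : {set M}) a n : a \in Clsharp A -> pow a n.+1 \in Clsharp A.
Proof. by move=> aC; elim: n => [|n IHn]; [rewrite mpow1 | apply: Clsharp_mul]. Qed.

Lemma Clsharp_min (A S : {set M}) : cl_step A S \subset S -> Clsharp A \subset S.
Proof.
move=> stepS; rewrite /Clsharp /fixset; elim: #|M| => [|n IHn] /=.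
  exact: sub0set.
exact: subset_trans (cl_step_mono A IHn) stepS.
Qed.

Lemma Clsharp_le_idem (A : {set M}) m :
  mul m m = m -> sharp m = m -> {in A, forall a, le a m} ->
  {in Clsharp A, forall x, le x m}.
Proof.
move=> mm sm Am w wC.
suff /subsetP/(_ w wC) : Clsharp A \subset [set y | le y m] by rewrite inE.
apply/Clsharp_min/subsetP => z; rewrite /cl_step !inE => /orP [/orP [/Am // |] |].
  case/imset2P => x y; rewrite !inE => xm ym ->.
  by rewrite -mm; apply: omm_mul_mono.
by case/imsetP => x; rewrite inE => xm ->; rewrite -sm; apply: omm_sharp_mono.
Qed.

Lemma lmul_set_Clsharp (A : {set M}) a :
  a \in Clsharp A -> lmul_set a (Clsharp A) \subset Clsharp A.
Proof. by move=> aC; apply/subsetP => _ /imsetP [x xC ->]; apply: Clsharp_mul. Qed.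

Lemma rmul_set_Clsharp (A : {set M}) a :
  a \in Clsharp A -> rmul_set (Clsharp A) a \subset Clsharp A.
Proof. by move=> aC; apply/subsetP => _ /imsetP [x xC ->]; apply: Clsharp_mul. Qed.

Section PermutingGenerators.

Variables (A : {set M}) (a0 : M).
Hypotheses (a0A : a0 \in A)
  (lC : {in A, forall a, lmul_set a (Clsharp A) = Clsharp A})
  (rC : {in A, forall a, rmul_set (Clsharp A) a = Clsharp A}).

Local Notation C := (Clsharp A).
Local Notation n0 := #|M|`!.
Let e := pow a0 n0.

Lemma mul_mpow_fact_l a x : a \in A -> x \in C -> mul (pow a n0) x = x.
Proof. by move=> aA xC; rewrite mul_mpowl (iter_fact_card_id (lC aA)). Qed.

Lemma mul_mpow_fact_r a x : a \in A -> x \in C -> mul x (pow a n0) = x.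
Proof. by move=> aA xC; rewrite mul_mpowr (iter_fact_card_id (rC aA)). Qed.

Lemma mpow_fact_in a : a \in A -> pow a n0 \in C.
Proof. by move=> aA; rewrite -(prednK (fact_gt0 _)) Clsharp_mpow ?Clsharp_base. Qed.

Lemma mpow_fact_unit a : a \in A -> pow a n0 = e.
Proof.
move=> aA; rewrite -[LHS](mul_mpow_fact_r a0A) ?mpow_fact_in //.
by rewrite mul_mpow_fact_l ?mpow_fact_in.
Qed.

Lemma unit_in : e \in C.
Proof. exact: mpow_fact_in. Qed.

Lemma unit_mull x : x \in C -> mul e x = x.
Proof. exact: mul_mpow_fact_l. Qed.

Lemma unit_mulr x : x \in C -> mul x e = x.
Proof. exact: mul_mpow_fact_r. Qed.

Lemma unit_le_sharp a : a \in A -> le e (sharp a).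
Proof. by move=> aA; rewrite -(mpow_fact_unit aA) -bang_exp0 omm_sharp_ge. Qed.

Lemma gen_le_sharp a : a \in A -> le a (sharp a).
Proof.
move=> aA; have := omm_sharp_ge a 1.
by rewrite bang_exp1 !mpowD mpow1 mpow_fact_unit // !unit_mull ?Clsharp_base.
Qed.

Lemma exists_upper_bound :
  exists2 p, p \in C & le e p /\ {in A, forall a, le a p}.
Proof.
suff [p pC [ep sp]] : exists2 p, p \in C & le e p /\ {in enum A, forall a, le a p}.
  by exists p => //; split=> // a aA; apply: sp; rewrite mem_enum.
have : {subset enum A <= A} by move=> a; rewrite mem_enum.
elim: (enum A) => [|a s IHs] sA.
  by exists e; rewrite ?unit_in //; split=> //; apply: omm_le_refl.
have aA : a \in A by apply: sA; rewrite inE eqxx.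
have [p pC [ep sp]] : exists2 p, p \in C & le e p /\ {in s, forall b, le b p}.
  by apply: IHs => b bs; apply: sA; rewrite inE bs orbT.
exists (mul p (sharp a)); first exact/Clsharp_mul/Clsharp_sharp/Clsharp_base.
split; first by rewrite -(unit_mull unit_in); apply: omm_mul_mono; rewrite ?unit_le_sharp.
move=> b; rewrite inE => /predU1P [-> | bs].
  by rewrite -{1}(unit_mull (Clsharp_base aA)); apply: omm_mul_mono; rewrite ?gen_le_sharp.
have bC : b \in C by apply/Clsharp_base/sA; rewrite inE bs orbT.
by rewrite -(unit_mulr bC); apply: omm_mul_mono; rewrite ?sp ?unit_le_sharp.
Qed.

Lemma Clsharp_max_of_perm : exists2 m, m \in C & {in C, forall x, le x m}.
Proof.
have [p pC [ep Ap]] := exists_upper_bound.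
have p_le_sharp : le p (sharp p).
  apply: (le_sharp_of_unit (e := e)) => //; last exact: unit_mulr.
  exact: unit_mull unit_in.
exists (sharp p); first exact: Clsharp_sharp.
apply: Clsharp_le_idem; [exact: omm_sharp_sq | exact: omm_sharp_sharp |].
by move=> a aA; apply: omm_le_trans (Ap a aA) p_le_sharp.
Qed.

End PermutingGenerators.

End OrdinalMonoidMerge.

Theorem lemma5p6 (M : ordinal_monoid_merge) (A : {set M}) :
  A != set0 ->
  [\/ exists2 a, a \in A & lmul_set a (Clsharp A) \proper Clsharp A,
      exists2 a, a \in A & rmul_set (Clsharp A) a \proper Clsharp A
    | exists2 m, m \in Clsharp A & forall x, x \in Clsharp A -> omm_le x m].
Proof.
case/set0Pn => a0 a0A.
have lsub : {in A, forall a, lmul_set a (Clsharp A) \subset Clsharp A}.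
  by move=> a aA; apply/lmul_set_Clsharp/Clsharp_base.
have rsub : {in A, forall a, rmul_set (Clsharp A) a \subset Clsharp A}.
  by move=> a aA; apply/rmul_set_Clsharp/Clsharp_base.
have [[a aA lpr] | lC] := exists_proper_or_eq lsub; first by apply: Or31; exists a.
have [[a aA rpr] | rC] := exists_proper_or_eq rsub; first by apply: Or32; exists a.
by apply: Or33; apply: Clsharp_max_of_perm a0A lC rC.
Qed.
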